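(* Consider a \textsc{Brick} payment channel between two parties $A$ and $B$ with a committee of $n=3f+1$ Wardens and threshold $t=2f+1$, as described in the context. Assume the network is asynchronous, at most one of the two channel parties is Byzantine (the other is honest), and at most $f$ of the Wardens are Byzantine (the remaining Wardens are honest). Then \textsc{Brick} achieves safety: the channel can only close in the freshest committed state.
   Context: Setting and model. Two channel parties $A,B$ and a committee of Wardens $W_1,\dots,W_n$ with $n=3f+1$ and threshold $t=2f+1$. All participants are computationally bounded; communication channels are authenticated and secure, the hash function $H$ is cryptographically secure (collision and pre-image resistant), and signatures are unforgeable. The underlying blockchain supports smart contracts and satisfies persistence (once a transaction is in the permanent part of one honest party's chain it is in every honest party's chain) and liveness (a transaction given to all honest parties for long enough is eventually included on-chain). The network is asynchronous: every message sent by an honest party is eventually delivered to every honest party, with no known delay bound. Honest participants follow the protocol; Byzantine ones deviate arbitrarily. Channel states carry sequence numbers $1,2,\dots$; $s_i$ denotes the state with sequence number $i$; $\sigma(\cdot)$ denotes the joint signature of both $A$ and $B$, $\sigma_{W_j}(\cdot)$ a signature of Warden $W_j$. Protocol \textsc{Brick}. Open: both parties sign $open(H(W_1),\dots,H(W_n),t,s_1,F)$ (committing Warden identities, threshold and a closing fee $F$), the initial state is announced via Update/Consistent Broadcast, the opening is published on-chain, and each Warden locks collateral in the smart contract. Update: for a new state $s_i$ the parties sign and exchange $\{H(s_i,r_i),i\}$ with a random $r_i$; after receiving the counterparty's signature on it, each party sends its signature on $i$, forming the announcement $\{M,\sigma(M)\}$ with $M=i$. Consistent Broadcast: each party sends the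 announcement (with a small fee) to all Wardens; a Warden checks that both parties' signatures are present and that the sequence number is exactly one higher than its stored one; if it has already published a closing announcement it ignores the update, otherwise it replaces its stored announcement, signs $M$ and returns $\sigma_{W_j}(M)$. A party considers the state committed once it holds at least $t$ Warden signatures on $M$, and only then proceeds. Optimistic Close: a party requests closing on state $s$; both parties sign $s$ and it is published on-chain. Pessimistic Close: a party sends $close()$ to all Wardens; each Warden publishes on-chain $\sigma_{W_j}(M,close)$ for its stored announcement $M$ and stops signing updates; once $t$ such closing announcements are on-chain the party takes the maximum sequence number $i$ among them and publishes $s_i$, $r_i$ and both parties' signatures on $\{H(s_i,r_i),i\}$; after inclusion in a permanent block the smart contract recomputes $H(s_i,r_i)$, verifies both parties' signatures on $\{H(s_i,r_i),i\}$, verifies that the $t$ announcements come from the Wardens committed at opening and that $i$ is their maximum sequence number, and then closes the channel in $s_i$. Definitions. A state $s_i$ is valid if both parties have signed it, it is the freshest (no subsequent state $s_{i+1}$ is valid), and the committee has not invalidated it (the committee invalidates $s_i$ if the channel closes in $s_{i-1}$). A state is committed if it was signed by at least $2f+1$ Wardens, or it is valid and included in a block in the persistent part of the blockchain. A channel is closed when its locked funds are spent on-chain. Safety: the channel will only close in the freshest committed state. *)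

From HB Require Import structures.
From mathcomp Require Import all_boot.

Set Implicit Arguments.
Unset Strict Implicit.
Unset Printing Implicit Defensive.

Definition n_wardens (f : nat) : nat := 3 * f + 1.
Definition threshold (f : nat) : nat := 2 * f + 1.
Notation warden f := 'I_(n_wardens f).

Notation party := bool (only parsing).
Definition partyA : party := false.
Definition partyB : party := true.

(* A (finite) execution is the sequence of all
   actions taken so far, in the (arbitrary, asynchronous) order in which
   they happened; on-chain actions appear in the order of the chain.
   State s_i is identified by its sequence number i (the hash H(s_i,r_i)
   signed by both parties binds the content to i).                      *)
Inductive event (f : nat) : Type :=
  (* party p signs {H(s_i,r_i), i} and M = i (update / announcement)   *)
  | PSign of party & nat
  | OptSign of party & nat
  | WSign of warden f & nat
  (* Warden w publishes on-chain the closing announcement sigma_w(i,close) *)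
  | WClose of warden f & nat
  (* pessimistic close on-chain in s_i, justified by the listed closing
     announcements (warden, sequence number)                            *)
  | ChainClose of nat & seq (warden f * nat)
  | OptClose of nat.

Arguments PSign {f}.
Arguments OptSign {f}.
Arguments WSign {f}.
Arguments WClose {f}.
Arguments ChainClose {f}.
Arguments OptClose {f}.

Definition event_code (f : nat) : Type :=
  (nat * bool * warden f * nat * seq (warden f * nat))%type.

Definition encode_event f (w0 : warden f) (e : event f) : event_code f :=
  match e with
  | PSign p i => (0, p, w0, i, [::])
  | OptSign p i => (1, p, w0, i, [::])
  | WSign w i => (2, false, w, i, [::])
  | WClose w i => (3, false, w, i, [::])
  | ChainClose i s => (4, false, w0, i, s)
  | OptClose i => (5, false, w0, i, [::])
  end.

Definition decode_event f (c : event_code f) : option (event f) :=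
  let: (k, p, w, i, s) := c in
  match k with
  | 0 => Some (PSign p i)
  | 1 => Some (OptSign p i)
  | 2 => Some (WSign w i)
  | 3 => Some (WClose w i)
  | 4 => Some (ChainClose i s)
  | 5 => Some (OptClose i)
  | _ => None
  end.

Lemma w0_of f : warden f.
Proof. by apply: (@Ordinal _ 0); rewrite /n_wardens addn1. Qed.

Lemma encode_eventK f : pcancel (@encode_event f (w0_of f)) (@decode_event f).
Proof. by case. Qed.

HB.instance Definition _ f :=
  Equality.copy (event f) (pcan_type (@encode_eventK f)).

Section Derived.
Variable f : nat.
Implicit Types (tr : seq (event f)) (i : nat) (p : party) (w : warden f).

Definition sigcount tr i : nat := #|[set w : warden f | WSign w i \in tr]|.

Definition annsigned tr i : bool := (PSign false i \in tr) && (PSign true i \in tr).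

Definition bothsigned tr i : bool :=
  [forall p : bool, (PSign p i \in tr) || (OptSign p i \in tr)].

(* the announcement currently stored by Warden w: the last one it signed
   (0 = nothing stored yet) *)
Definition stored tr w : nat :=
  foldl (fun acc e => if e is WSign w' j then (if w' == w then j else acc) else acc) 0 tr.

Definition wclosed tr w : bool :=
  has (fun e => if e is WClose w' _ then w' == w else false) tr.

Definition optsigned tr p : bool :=
  has (fun e => if e is OptSign q _ then q == p else false) tr.

Definition closed tr : bool :=
  has (fun e => match e with ChainClose _ _ | OptClose _ => true | _ => false end) tr.

Definition closed_in tr i : bool :=
  has (fun e => match e with
                | ChainClose j _ => j == i
                | OptClose j => j == i
                | _ => false end) tr.

Definition ev_idx (e : event f) : nat :=
  match e with
  | PSign _ i | OptSign _ i | WSign _ i | WClose _ i | OptClose i => i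
  | ChainClose i s => maxn i (foldr maxn 0 (map snd s))
  end.
Definition maxidx tr : nat := foldr maxn 0 (map ev_idx tr).

(* Validity, literally as in the paper:
     s_i is valid iff both parties signed it, the committee has not
     invalidated it (the channel did not close in s_(i-1)), and the next
     state s_(i+1) is not valid.
   The recursion goes upwards; it is computed with fuel, which is enough
   since no state beyond [maxidx tr] is signed by both parties. *)
Fixpoint valid_aux tr (fuel : nat) i : bool :=
  match fuel with
  | 0 => false
  | fuel'.+1 =>
      [&& bothsigned tr i, ~~ ((0 < i) && closed_in tr i.-1)
        & ~~ valid_aux tr fuel' i.+1]
  end.
Definition valid tr i : bool := valid_aux tr (maxidx tr).+1 i.

(* s_i is committed: signed by at least 2f+1 Wardens, or valid and
   included on-chain (the state is put on-chain exactly when the channel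
   closes in it). *)
Definition committed tr i : bool :=
  (threshold f <= sigcount tr i) || (valid tr i && closed_in tr i).

Definition freshest_committed tr i : Prop :=
  committed tr i /\ forall j, committed tr j -> j <= i.

(* Which actions may happen next, after execution [tr].
   [BW] is the set of Byzantine Wardens; [byzP = Some p] means party p is
   Byzantine, [byzP = None] means both parties are honest.  Byzantine
   participants may perform any action (they can only not forge
   signatures of honest participants, which is reflected by the fact that
   every signature event is an action of its signer).  On-chain closing is
   enforced by the smart contract for everybody.                         *)
Variables (BW : {set warden f}) (byzP : option party).

Definition byz_party p : bool := byzP == Some p.

Definition allowed tr (e : event f) : bool :=
  match e with
  | PSign p i =>
      byz_party p ||
      [&& (i == 1) || (threshold f <= sigcount tr i.-1),   (* s_(i-1) committed *)
          PSign p i \notin tr & ~~ optsigned tr p]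
  | OptSign p i =>
      byz_party p ||
      ((PSign p i \in tr) &&          (* i is the freshest state p signed *)
       all (fun e' => if e' is PSign q j then (q != p) || (j <= i) else true) tr)
  | WSign w i =>
      (w \in BW) ||
      [&& annsigned tr i, i == (stored tr w).+1 & ~~ wclosed tr w]
  | WClose w i =>
      (w \in BW) || ((i == stored tr w) && ~~ wclosed tr w)
  | ChainClose i anns =>
      [&& ~~ closed tr,
          threshold f <= size anns,
          uniq (map fst anns),
          all (fun a => WClose a.1 a.2 \in tr) anns,
          i == foldr maxn 0 (map snd anns)
        & annsigned tr i]
  | OptClose i =>
      [&& ~~ closed tr, OptSign false i \in tr & OptSign true i \in tr]
  end.

Inductive reachable : seq (event f) -> Prop :=
  | reach_nil : reachable [::]
  | reach_step tr e : reachable tr -> allowed tr e -> reachable (rcons tr e).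

End Derived.

From Pilot Require Import Defs.
From mathcomp Require Import all_boot zify.

Set Implicit Arguments.
Unset Strict Implicit.
Unset Printing Implicit Defensive.

(* Fix an honest party p.  The channel closes in s_i in one of two ways.  In a
   pessimistic close, s_i is the largest of 2f+1 closing announcements; any
   quorum of 2f+1 Warden signatures on a state s_k meets these announcers in
   f+1 Wardens, hence in an honest one, which signed s_k before announcing its
   stored state, so k <= i.  In an optimistic close, s_i is the freshest state
   p ever signed, and any quorum on s_k contains an honest Warden, which only
   signs states both parties announced, so again k <= i.  The closing state is
   itself committed: either it has a quorum, or it is valid, since p signs
   s_(i+1) only once s_i has a quorum, and never beyond an optimistic close.
   The contract lets the channel close only once, so no other state is both
   valid and on-chain. *)

Lemma card_lt_exists_notin (T : finType) (A B : {set T}) :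
  #|B| < #|A| -> exists2 x, x \in A & x \notin B.
Proof.
move=> ltBA; apply/subsetPn; apply: contraTN ltBA => /subset_leq_card.
by rewrite leqNgt.
Qed.

Lemma leq_foldr_maxn (s : seq nat) x : x \in s -> x <= foldr maxn 0 s.
Proof. by elim: s => //= y s IHs; rewrite in_cons => /predU1P [-> | /IHs]; lia. Qed.

Lemma quorum_intersection f (S T : {set warden f}) :
  threshold f <= #|S| -> threshold f <= #|T| -> f < #|S :&: T|.
Proof.
have := cardsUI S T; have := max_card (S :|: T); rewrite card_ord.
rewrite /n_wardens /threshold; lia.
Qed.

Section Executions.
Variable f : nat.
Implicit Types (tr : seq (event f)) (e : event f) (w : warden f) (p : bool).

Lemma mem_rconsl tr e x : x \in tr -> x \in rcons tr e.
Proof. by rewrite mem_rcons in_cons => ->; rewrite orbT. Qed.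

Lemma annsigned_rcons i tr e : annsigned tr i -> annsigned (rcons tr e) i.
Proof. by case/andP => signA signB; rewrite /annsigned !mem_rconsl. Qed.

Lemma sigcount_rcons tr e i : sigcount tr i <= sigcount (rcons tr e) i.
Proof. by apply/subset_leq_card/subsetP => w; rewrite !inE; apply: mem_rconsl. Qed.

Lemma stored_rcons tr e w :
  stored (rcons tr e) w =
  if e is WSign w' j then (if w' == w then j else stored tr w) else stored tr w.
Proof. by rewrite /stored foldl_rcons; case: e. Qed.

Lemma wclosed_mem tr w k : WClose w k \in tr -> wclosed tr w.
Proof. by move=> close_k; apply/hasP; exists (WClose w k) => /=. Qed.

Lemma optsigned_mem tr p k : OptSign p k \in tr -> optsigned tr p.
Proof. by move=> opt_k; apply/hasP; exists (OptSign p k) => /=. Qed.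

Lemma annsigned_psign tr p i : annsigned tr i -> PSign p i \in tr.
Proof. by case/andP; case: p. Qed.

Lemma annsigned_bothsigned tr i : annsigned tr i -> bothsigned tr i.
Proof. by move=> ann_i; apply/forallP => p; rewrite annsigned_psign. Qed.

Lemma closed_in_closed tr i : closed_in tr i -> Defs.closed tr.
Proof. by apply: sub_has; case. Qed.

Lemma valid_aux_bothsigned tr fuel i : valid_aux tr fuel i -> bothsigned tr i.
Proof. by case: fuel => //= fuel /and3P []. Qed.

End Executions.

Section Reachable.
Variables (f : nat) (BW : {set warden f}) (byzP : option bool).
Implicit Types (tr : seq (event f)) (e : event f) (w : warden f).
Local Notation reachable := (reachable BW byzP).
Local Notation allowed := (allowed BW byzP).

Lemma reachable_mem_guard (P : seq (event f) -> Prop) tr e :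
  (forall t x, P t -> P (rcons t x)) -> (forall t, allowed t e -> P t) ->
  reachable tr -> e \in tr -> P tr.
Proof.
move=> P_rcons P_allowed; elim=> // t x _ IHt allowed_x.
rewrite mem_rcons in_cons => /predU1P [ex | /IHt Pt]; apply: P_rcons => //.
by apply: P_allowed; rewrite ex.
Qed.

Lemma closed_in_inj tr i j : reachable tr -> closed_in tr i -> closed_in tr j -> i = j.
Proof.
elim=> // t e _ IHt; rewrite /closed_in !has_rcons.
case: e => [p k|p k|w k|w k|k anns|k] //=;
  rewrite -/(Defs.closed t) => /andP [open_t _];
  by do 2![case/orP => [/eqP <- | /closed_in_closed closed_t];
             last by rewrite closed_t in open_t].
Qed.

Lemma closed_state_valid tr i : reachable tr -> closed_in tr i ->
  bothsigned tr i -> ~~ bothsigned tr i.+1 -> valid tr i.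
Proof.
move=> R closed_i signed_i unsigned_next; rewrite /valid /=; apply/and3P; split=> //.
- by apply/andP => -[i_gt0 /(closed_in_inj R closed_i)]; lia.
- by apply: contra unsigned_next; apply: valid_aux_bothsigned.
Qed.

Variant closing_evidence tr i : Prop :=
  | PessimisticClose (anns : seq (warden f * nat)) of
      threshold f <= size anns & uniq (map fst anns) &
      {in anns, forall a, WClose a.1 a.2 \in tr} &
      i = foldr maxn 0 (map snd anns) & annsigned tr i
  | OptimisticClose of OptSign partyA i \in tr & OptSign partyB i \in tr.

Lemma closing_evidence_rcons i tr e :
  closing_evidence tr i -> closing_evidence (rcons tr e) i.
Proof.
case=> [anns quorum uniq_anns closes max_i ann_i | optA optB].
- apply: (PessimisticClose quorum uniq_anns) => //; last exact: annsigned_rcons.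
  by move=> a /closes /mem_rconsl.
- by apply: OptimisticClose; apply: mem_rconsl.
Qed.

Lemma closing_evidenceP tr i : reachable tr -> closed_in tr i -> closing_evidence tr i.
Proof.
move=> R /hasP [[p k|p k|w k|w k|k anns|k] //= close_k /eqP <-{i}];
  apply: (reachable_mem_guard (@closing_evidence_rcons k) _ R close_k) => t /=.
- case/and5P=> _ quorum uniq_anns /allP closes /andP [/eqP max_k ann_k].
  exact: (PessimisticClose quorum uniq_anns closes max_k ann_k).
- by case/and3P=> _; apply: OptimisticClose.
Qed.

Lemma honest_wsign_annsigned tr w j : reachable tr -> w \notin BW ->
  WSign w j \in tr -> annsigned tr j.
Proof.
move=> R honest_w; apply: (reachable_mem_guard (@annsigned_rcons f j) _ R) => t /=.
by rewrite (negbTE honest_w) => /and3P [].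
Qed.

Lemma honest_wsign_le_stored tr w j : reachable tr -> w \notin BW ->
  WSign w j \in tr -> j <= stored tr w.
Proof.
move=> R honest_w; elim: R j => // t e _ IHt allowed_e j.
rewrite stored_rcons mem_rcons in_cons => /predU1P [<- | /IHt le_j].
  by rewrite /= eqxx.
case: e allowed_e => //= w' k; case: (eqVneq w' w) => [-> | _ _ //].
by rewrite (negbTE honest_w) => /and3P [_ /eqP ->]; lia.
Qed.

Lemma honest_wsign_le_wclose tr w j k : reachable tr -> w \notin BW ->
  WSign w j \in tr -> WClose w k \in tr -> j <= k.
Proof.
move=> R honest_w; elim: R => // t e R IHt allowed_e.
rewrite !mem_rcons !in_cons => /predU1P [ej | sign_j] /predU1P [ek | close_k].
- by rewrite -ek in ej.
- rewrite -ej /= (negbTE honest_w) in allowed_e.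
  by case/and3P: allowed_e => _ _; rewrite (wclosed_mem close_k).
- rewrite -ek /= (negbTE honest_w) in allowed_e.
  by case/andP: allowed_e => /eqP -> _; exact: (honest_wsign_le_stored R honest_w sign_j).
- exact: IHt.
Qed.

Section HonestParty.
Variable p : bool.
Hypothesis honest_p : ~~ byz_party byzP p.

Lemma honest_psign_quorum tr k : reachable tr -> PSign p k \in tr ->
  (k == 1) || (threshold f <= sigcount tr k.-1).
Proof.
apply: (@reachable_mem_guard (fun t => (k == 1) || (threshold f <= sigcount t k.-1)))
  => [t e | t /=].
- by case/orP => [-> // | /leq_trans quorum]; rewrite quorum ?orbT ?sigcount_rcons.
- by rewrite (negbTE honest_p) => /and3P [].
Qed.

Lemma honest_psign_next tr i : reachable tr ->
  PSign p i \in tr -> PSign p i.+1 \in tr -> threshold f <= sigcount tr i.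
Proof.
move=> R /(honest_psign_quorum R) sign_i /(honest_psign_quorum R).
(* For i = 0 the second guard holds vacuously, but the first one, read with
   0.-1 = 0, is then the required quorum. *)
by case: i sign_i => [|i] //= quorum0 _.
Qed.

Lemma honest_optsign_psign tr k : reachable tr -> OptSign p k \in tr -> PSign p k \in tr.
Proof.
apply: (@reachable_mem_guard (fun t => PSign p k \in t)) => [t e | t /=].
  exact: mem_rconsl.
by rewrite (negbTE honest_p) => /andP [].
Qed.

Lemma honest_optsign_freshest tr j k : reachable tr ->
  OptSign p k \in tr -> PSign p j \in tr -> j <= k.
Proof.
elim=> // t e R IHt allowed_e.
rewrite !mem_rcons !in_cons => /predU1P [ek | opt_k] /predU1P [ej | sign_j].
- by rewrite -ek in ej.
- rewrite -ek /= (negbTE honest_p) in allowed_e.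
  by case/andP: allowed_e => _ /allP /(_ _ sign_j); rewrite eqxx.
- rewrite -ej /= (negbTE honest_p) in allowed_e.
  by case/and3P: allowed_e => _ _; rewrite (optsigned_mem opt_k).
- exact: IHt.
Qed.

Lemma bothsigned_honest_psign tr k : reachable tr -> bothsigned tr k -> PSign p k \in tr.
Proof.
by move=> R /forallP /(_ p) /orP [// | /(honest_optsign_psign R)].
Qed.

Lemma committed_closing_state tr i : reachable tr -> closed_in tr i -> committed tr i.
Proof.
move=> R closed_i; rewrite /committed closed_i andbT.
case: leqP => [// | no_quorum].
case: (closing_evidenceP R closed_i) => [anns _ _ _ _ ann_i | optA optB].
- apply: closed_state_valid (annsigned_bothsigned ann_i) _ => //.
  apply/negP => /(bothsigned_honest_psign R).
  by move/(honest_psign_next R (annsigned_psign p ann_i)); rewrite leqNgt no_quorum.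
- have opt_i : OptSign p i \in tr by case: p honest_p.
  apply: closed_state_valid => //; first by apply/forallP => -[]; rewrite ?optA ?optB orbT.
  by apply/negP => /(bothsigned_honest_psign R) /(honest_optsign_freshest R opt_i); lia.
Qed.

Lemma quorum_le_closing_state tr i k : #|BW| <= f -> reachable tr ->
  closed_in tr i -> threshold f <= sigcount tr k -> k <= i.
Proof.
move=> small_BW R closed_i quorum_k.
case: (closing_evidenceP R closed_i) => [anns quorum uniq_anns closes -> _ | optA optB].
- set announcers := [set w | w \in map fst anns].
  have card_announcers : #|announcers| = size anns.
    by rewrite cardsE (card_uniqP uniq_anns) size_map.
  have quorum_announcers : threshold f <= #|announcers| by rewrite card_announcers.
  have [w] := card_lt_exists_notin
    (leq_ltn_trans small_BW (quorum_intersection quorum_k quorum_announcers)).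
  rewrite !inE => /andP [sign_w /mapP [a ann_a w_a]] honest_w; subst w.
  apply: leq_trans (honest_wsign_le_wclose R honest_w sign_w (closes a ann_a)) _.
  exact/leq_foldr_maxn/map_f.
- have opt_i : OptSign p i \in tr by case: p honest_p.
  have few_BW : #|BW| < sigcount tr k.
    by apply: leq_ltn_trans small_BW _; rewrite /threshold in quorum_k; lia.
  have [w] := card_lt_exists_notin few_BW; rewrite inE => sign_w honest_w.
  apply: (honest_optsign_freshest R opt_i); apply: annsigned_psign.
  exact: (honest_wsign_annsigned R honest_w sign_w).
Qed.

End HonestParty.

End Reachable.

Lemma exists_honest_party (byzP : option bool) : exists p, ~~ byz_party byzP p.
Proof. by case: byzP => [q|]; [exists (~~ q); case: q | exists partyA]. Qed.

Theorem theorem1 (f : nat) (BW : {set warden f}) (byzP : option bool)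
    (tr : seq (event f)) :
  #|BW| <= f ->
  reachable BW byzP tr ->
  forall i : nat, closed_in tr i -> freshest_committed tr i.
Proof.
move=> small_BW R i closed_i; have [p honest_p] := exists_honest_party byzP.
split; first exact: (committed_closing_state honest_p R closed_i).
move=> k /orP [quorum_k | /andP [_ closed_k]].
- exact: (quorum_le_closing_state honest_p small_BW R closed_i quorum_k).
- by rewrite (closed_in_inj R closed_i closed_k).
Qed.
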